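(* Let $H$ be a finite normal subgroup of a group $G$ such that the center of $H$ is trivial. If $G/H$ is a Jordan group, then $G$ is a Jordan group and $J_G\leqslant |\mathrm{Aut}(H)|\, J_{G/H}^{|\mathrm{Aut}(H)|}$.
   Context: A group $G$ is called Jordan if there exists a positive integer $d$ such that every finite subgroup $K$ of $G$ contains a normal abelian subgroup of index at most $d$ in $K$; the minimal such $d$ is the Jordan constant $J_G$. *)

From Stdlib Require Import Arith List.
Import ListNotations.

Record Group := {
  carrier :> Type;
  gmul : carrier -> carrier -> carrier;
  gone : carrier;
  ginv : carrier -> carrier;
  gmulA : forall x y z, gmul x (gmul y z) = gmul (gmul x y) z;
  gmul1l : forall x, gmul gone x = x;
  gmul1r : forall x, gmul x gone = x;
  gmulVl : forall x, gmul (ginv x) x = gone;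
  gmulVr : forall x, gmul x (ginv x) = gone
}.

Arguments gmul {g}.
Arguments gone {g}.
Arguments ginv {g}.

Definition card {T : Type} (P : T -> Prop) (n : nat) : Prop :=
  exists s : list T, NoDup s /\ length s = n /\ (forall x, P x <-> In x s).

Definition finite_set {T : Type} (P : T -> Prop) : Prop := exists n, card P n.

Definition subgroup {G : Group} (K : G -> Prop) : Prop :=
  K gone /\ (forall x y, K x -> K y -> K (gmul x y)) /\ (forall x, K x -> K (ginv x)).

Definition finite_subgroup {G : Group} (K : G -> Prop) : Prop :=
  subgroup K /\ finite_set K.

Definition normal_in {G : Group} (A K : G -> Prop) : Prop :=
  subgroup A /\ (forall x, A x -> K x) /\
  (forall k a, K k -> A a -> A (gmul (gmul k a) (ginv k))).

Definition abelian_set {G : Group} (A : G -> Prop) : Prop :=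
  forall a b, A a -> A b -> gmul a b = gmul b a.

Definition index_le {G : Group} (K A : G -> Prop) (d : nat) : Prop :=
  exists nK nA, card K nK /\ card A nA /\ nK / nA <= d.

Definition jordan_with (G : Group) (d : nat) : Prop :=
  0 < d /\
  forall K : G -> Prop, finite_subgroup K ->
    exists A : G -> Prop, normal_in A K /\ abelian_set A /\ index_le K A d.

Definition jordan (G : Group) : Prop := exists d, jordan_with G d.

Definition jordan_constant (G : Group) (d : nat) : Prop :=
  jordan_with G d /\ (forall d', jordan_with G d' -> d <= d').

Definition hom {G Q : Group} (f : G -> Q) : Prop :=
  forall x y, f (gmul x y) = gmul (f x) (f y).

(* Q is (isomorphic to) G/H via pi: pi is a surjective hom with kernel H *)
Definition quotient_map {G Q : Group} (H : G -> Prop) (pi : G -> Q) : Prop :=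
  hom pi /\ (forall q : Q, exists g, pi g = q) /\ (forall g, pi g = gone <-> H g).

Definition trivial_center {G : Group} (H : G -> Prop) : Prop :=
  forall z, H z -> (forall h, H h -> gmul z h = gmul h z) -> z = gone.

(* automorphisms of the subgroup H, represented by maps G -> G, considered
   up to agreement on H *)
Definition automorphism_of {G : Group} (H : G -> Prop) (f : G -> G) : Prop :=
  (forall x, H x -> H (f x)) /\
  (forall y, H y -> exists x, H x /\ f x = y) /\
  (forall x y, H x -> H y -> f x = f y -> x = y) /\
  (forall x y, H x -> H y -> f (gmul x y) = gmul (f x) (f y)).

Definition agree_on {G : Group} (H : G -> Prop) (f g : G -> G) : Prop :=
  forall x, H x -> f x = g x.

Definition aut_card {G : Group} (H : G -> Prop) (n : nat) : Prop :=
  exists ls : list (G -> G),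
    length ls = n /\
    Forall (automorphism_of H) ls /\
    ForallOrdPairs (fun f g => ~ agree_on H f g) ls /\
    (forall f, automorphism_of H f -> exists g, In g ls /\ agree_on H f g).

From Stdlib Require Import Arith List Lia Wf_nat ClassicalEpsilon Classical.
Import ListNotations.

(* Let C be the centralizer of H.  Since Z(H) = 1, C meets H trivially and pi is injective
   on C.  For a finite subgroup K of G, conjugation embeds K / (K /\ C) into Aut(H), so
   M := K /\ C has index at most |Aut(H)| in K.  The Jordan property of G/H applied to the
   finite group pi(M) ~ M gives a normal abelian B of index at most J in it; the intersection
   of the at most |Aut(H)| conjugates of the preimage of B under elements of K is a normal
   abelian subgroup of K of index at most |Aut(H)| * J^|Aut(H)|. *)

Definition decb (P : Prop) : bool := if excluded_middle_informative P then true else false.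

Lemma decbP (P : Prop) : decb P = true <-> P.
Proof. unfold decb; destruct (excluded_middle_informative P); split; congruence || tauto. Qed.

Lemma NoDup_length_eq {T} (l1 l2 : list T) :
  NoDup l1 -> NoDup l2 -> (forall x, In x l1 <-> In x l2) -> length l1 = length l2.
Proof.
  intros H1 H2 E. apply Nat.le_antisymm; apply NoDup_incl_length; auto; intros x; apply E.
Qed.

Lemma card_unique {T} (P : T -> Prop) n m : card P n -> card P m -> n = m.
Proof.
  intros [s [Hs [<- Es]]] [t [Ht [<- Et]]].
  apply NoDup_length_eq; auto. intro x. rewrite <- Es, <- Et. reflexivity.
Qed.

Lemma card_ext {T} (P S : T -> Prop) n : (forall x, P x <-> S x) -> card P n -> card S n.
Proof. intros E [s [Hs [Hl Hm]]]. exists s; repeat split; auto; intro Hx; firstorder. Qed.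

Lemma card_subset {T} (P S : T -> Prop) n :
  card P n -> (forall x, S x -> P x) -> finite_set S.
Proof.
  intros [s [Hs [_ Hm]]] HSP. set (s' := filter (fun x => decb (S x)) s).
  exists (length s'), s'. split; [apply NoDup_filter; auto | split; [reflexivity |]].
  intros x. unfold s'. rewrite filter_In, decbP, <- Hm. firstorder.
Qed.

Lemma card_le_inj {T U} (l : list T) (f : T -> U) (P : U -> Prop) n :
  NoDup l -> (forall x, In x l -> P (f x)) ->
  (forall x y, In x l -> In y l -> f x = f y -> x = y) -> card P n -> length l <= n.
Proof.
  intros Hl HP Hinj [s [Hs [<- Hm]]].
  rewrite <- (length_map f l). apply NoDup_incl_length.
  - apply NoDup_map_NoDup_ForallPairs; [intros x y Hx Hy; apply Hinj; auto | exact Hl].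
  - intros y Hy. apply in_map_iff in Hy. destruct Hy as [x [<- Hx]]. apply Hm, HP, Hx.
Qed.

Lemma length_filter_split {T} (p : T -> bool) l :
  length l = length (filter p l) + length (filter (fun x => negb (p x)) l).
Proof. induction l as [|x l IH]; simpl; auto. destruct (p x); simpl; lia. Qed.

Lemma length_le_fibres {T U} (L : list U) (R : T -> U -> Prop) c (s : list T) :
  NoDup s -> (forall x, In x s -> exists y, In y L /\ R x y) ->
  (forall y, In y L -> forall s', NoDup s' -> (forall x, In x s' -> In x s /\ R x y) ->
     length s' <= c) ->
  length s <= length L * c.
Proof.
  revert s. induction L as [|y L IH]; intros s Hs Hcov Hfib.
  - destruct s as [|x s]; [simpl; lia|]. destruct (Hcov x (or_introl eq_refl)) as [y [[] _]].
  - rewrite (length_filter_split (fun x => decb (R x y)) s). simpl.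
    assert (length (filter (fun x => decb (R x y)) s) <= c).
    { apply (Hfib y (or_introl eq_refl)); [apply NoDup_filter; auto|].
      intros x Hx. apply filter_In in Hx. rewrite decbP in Hx. exact Hx. }
    assert (length (filter (fun x => negb (decb (R x y))) s) <= length L * c).
    { apply IH; [apply NoDup_filter; auto| |].
      - intros x Hx. apply filter_In in Hx. destruct Hx as [Hx Hn].
        destruct (Hcov x Hx) as [y' [[<- | Hy'] HR]]; eauto.
        apply decbP in HR. rewrite HR in Hn. discriminate.
      - intros y' Hy' s' Hs' Hsub. apply (Hfib y' (or_intror Hy') s' Hs').
        intros x Hx. destruct (Hsub x Hx) as [Hx' HR]. apply filter_In in Hx'. tauto. }
    lia.
Qed.

Lemma choose_witnesses {X Y} (R : X -> Y -> Prop) (ls : list X) :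
  exists ys, length ys <= length ls /\ (forall y, In y ys -> exists x, R x y) /\
    (forall x, In x ls -> (exists y, R x y) -> exists y, In y ys /\ R x y).
Proof.
  induction ls as [|x ls [ys [Hlen [Hys Hcov]]]].
  - exists []. simpl. repeat split; [lia | tauto | tauto].
  - destruct (classic (exists y, R x y)) as [[y Hy] | Hnone].
    + exists (y :: ys). simpl. repeat split; [lia | |].
      * intros y' [<- | Hy']; eauto.
      * intros x' [<- | Hx'] Hex; [exists y; auto|].
        destruct (Hcov x' Hx' Hex) as [y' [? ?]]. eauto.
    + exists ys. simpl. repeat split; [lia | exact Hys |].
      intros x' [<- | Hx'] Hex; [contradiction | auto].
Qed.

Section GroupFacts.
Variable G : Group.
Implicit Types x y : G.

Lemma mulKg x y : gmul (ginv x) (gmul x y) = y.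
Proof. rewrite gmulA, gmulVl, gmul1l; reflexivity. Qed.

Lemma mulKVg x y : gmul x (gmul (ginv x) y) = y.
Proof. rewrite gmulA, gmulVr, gmul1l; reflexivity. Qed.

Lemma invg_unique x y : gmul x y = gone -> y = ginv x.
Proof. intro E. rewrite <- (mulKg x y), E, gmul1r. reflexivity. Qed.

Lemma invgK x : ginv (ginv x) = x.
Proof. symmetry; apply invg_unique, gmulVl. Qed.

Lemma invMg x y : ginv (gmul x y) = gmul (ginv y) (ginv x).
Proof.
  symmetry; apply invg_unique.
  rewrite <- gmulA, (gmulA _ y), gmulVr, gmul1l, gmulVr. reflexivity.
Qed.

Lemma invg1 : ginv (@gone G) = gone.
Proof. symmetry; apply invg_unique, gmul1l. Qed.

End GroupFacts.

Arguments mulKg {G}. Arguments mulKVg {G}. Arguments invgK {G}. Arguments invMg {G}.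
Arguments invg1 {G}.

Hint Rewrite <- gmulA : group.
Hint Rewrite gmul1l gmul1r gmulVl gmulVr @mulKg @mulKVg @invgK @invMg @invg1 : group.
Ltac group_simpl :=
  autorewrite with group in *; try reflexivity; try assumption; try (symmetry; assumption).

Lemma morph1 {G Q : Group} (f : G -> Q) : hom f -> f gone = gone.
Proof.
  intro Hf. assert (E : gmul (f gone) (f gone) = f gone) by (rewrite <- Hf, gmul1l; reflexivity).
  rewrite <- (mulKg (f gone) (f gone)), E, gmulVl. reflexivity.
Qed.

Lemma morphV {G Q : Group} (f : G -> Q) x : hom f -> f (ginv x) = ginv (f x).
Proof. intro Hf. apply invg_unique. rewrite <- Hf, gmulVr. apply morph1, Hf. Qed.

Definition conjg {G : Group} (k x : G) : G := gmul (gmul k x) (ginv k).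

Lemma conjg_hom {G : Group} (k : G) : hom (conjg k).
Proof. intros x y. unfold conjg. group_simpl. Qed.

Lemma conjgM {G : Group} (k1 k2 x : G) : conjg (gmul k1 k2) x = conjg k1 (conjg k2 x).
Proof. unfold conjg. group_simpl. Qed.

Lemma morph_conjg {G Q : Group} (f : G -> Q) k x : hom f -> f (conjg k x) = conjg (f k) (f x).
Proof. intro Hf. unfold conjg. rewrite !Hf, (morphV f k Hf). reflexivity. Qed.

Lemma card_le_cosets {G : Group} {U} (S T : G -> Prop) (r : list U) (R : G -> U -> Prop) nS nT :
  card S nS -> card T nT -> (forall x, S x -> exists y, In y r /\ R x y) ->
  (forall y x0 x, S x0 -> S x -> R x0 y -> R x y -> T (gmul (ginv x0) x)) ->
  nS <= length r * nT.
Proof.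
  intros [s [Hs [<- Hm]]] HT Hcov Hfib.
  apply (length_le_fibres r R); auto.
  - intros x Hx. apply Hcov, Hm, Hx.
  - intros y _ [|x0 s'] Hs' Hsub; [simpl; lia|].
    destruct (Hsub x0 (or_introl eq_refl)) as [Hx0 Ry0].
    apply (card_le_inj _ (gmul (ginv x0)) T); auto.
    + intros x Hx. destruct (Hsub x Hx) as [Hx' Ryx]. apply Hm in Hx0, Hx'. eauto.
    + intros u v _ _ E. apply (f_equal (gmul x0)) in E. group_simpl.
Qed.

Lemma left_transversal_list {G : Group} (B : G -> Prop) (lB : list G) :
  subgroup B -> NoDup lB -> (forall x, B x <-> In x lB) ->
  forall s : list G, NoDup s -> (forall x b, In x s -> B b -> In (gmul x b) s) ->
  exists r : list G, length s = length lB * length r /\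
    (forall x, In x s -> exists y, In y r /\ B (gmul (ginv y) x)).
Proof.
  intros [HB1 [HBM HBV]] HlB HBl s.
  induction s as [s IH] using (induction_ltof1 _ (@length G)); unfold ltof in IH.
  intros Hs Hcl. destruct s as [|x0 s0]; [exists []; simpl; split; [lia | intros x []]|].
  set (s := x0 :: s0) in *.
  set (in_x0B := fun x => decb (B (gmul (ginv x0) x))).
  set (s' := filter (fun x => negb (in_x0B x)) s).
  assert (Ecoset : length (filter in_x0B s) = length lB).
  { rewrite <- (length_map (gmul x0) lB). apply NoDup_length_eq.
    - apply NoDup_filter, Hs.
    - apply NoDup_map_NoDup_ForallPairs; [|exact HlB].
      intros u v _ _ E. apply (f_equal (gmul (ginv x0))) in E. group_simpl.
    - intro x. rewrite filter_In, in_map_iff. unfold in_x0B. rewrite decbP. split.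
      + intros [_ Hb]. exists (gmul (ginv x0) x). rewrite <- HBl. split; [group_simpl | exact Hb].
      + intros [b [<- Hb]]. rewrite <- HBl in Hb. split; [apply Hcl; simpl; auto | group_simpl]. }
  assert (Hlen : length s = length lB + length s').
  { unfold s'. rewrite (length_filter_split in_x0B s), Ecoset. reflexivity. }
  assert (HlB0 : 0 < length lB) by (destruct lB; [apply HBl in HB1; destruct HB1 | simpl; lia]).
  destruct (IH s') as [r [Hr Hcov]]; [lia | apply NoDup_filter, Hs | |].
  - intros x b Hx Hb. unfold s' in *. rewrite filter_In in *. destruct Hx as [Hx Hnx].
    split; [apply Hcl; auto|].
    destruct (in_x0B (gmul x b)) eqn:Exb; [|reflexivity]. unfold in_x0B in *.
    rewrite decbP in Exb. exfalso.
    assert (Hx0x : B (gmul (gmul (ginv x0) (gmul x b)) (ginv b))) by auto.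
    group_simpl. apply decbP in Hx0x. rewrite Hx0x in Hnx. discriminate.
  - exists (x0 :: r). split; [change (length (x0 :: r)) with (S (length r)); lia|].
    intros x Hx. destruct (in_x0B x) eqn:Ex.
    + exists x0. split; [left; reflexivity | apply decbP, Ex].
    + destruct (Hcov x) as [y [Hy Hyx]]; [apply filter_In; rewrite Ex; auto|].
      exists y. split; [right|]; assumption.
Qed.

Lemma left_transversal {G : Group} (B S : G -> Prop) nB nS :
  subgroup B -> card B nB -> card S nS -> (forall x b, S x -> B b -> S (gmul x b)) ->
  exists r : list G, nS = nB * length r /\
    (forall x, S x -> exists y, In y r /\ B (gmul (ginv y) x)).
Proof.
  intros HB [lB [HlB [<- HBl]]] [s [Hs [<- HSs]]] Hcl.
  destruct (left_transversal_list B lB HB HlB HBl s Hs) as [r [Hr Hcov]].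
  - intros x b Hx Hb. apply HSs. apply HSs in Hx. auto.
  - exists r. split; [exact Hr|]. intros x Hx. apply Hcov, HSs, Hx.
Qed.

Lemma card_le_preimage {G Q : Group} (S : G -> Prop) (f : G -> Q) (B : Q -> Prop)
    (r : list Q) nS :
  subgroup S -> hom f -> subgroup B -> card S nS ->
  (forall x, S x -> exists y, In y r /\ B (gmul (ginv y) (f x))) ->
  exists nT, card (fun x => S x /\ B (f x)) nT /\ nS <= length r * nT.
Proof.
  intros [_ [HSM HSV]] Hf [_ [HBM HBV]] HnS Hcov.
  destruct (card_subset S (fun x => S x /\ B (f x)) nS HnS) as [nT HnT]; [tauto|].
  exists nT. split; [exact HnT|].
  apply (card_le_cosets S (fun x => S x /\ B (f x)) r
           (fun x y => B (gmul (ginv y) (f x))) nS nT); auto.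
  intros y x0 x Hx0 Hx Hyx0 Hyx. split; [auto|].
  replace (f (gmul (ginv x0) x))
    with (gmul (ginv (gmul (ginv y) (f x0))) (gmul (ginv y) (f x))); [auto|].
  rewrite Hf, (morphV f x0 Hf). group_simpl.
Qed.

Section Preimages.
Variables (G Q : Group) (I : Type) (S : G -> Prop) (f : I -> G -> Q) (B : Q -> Prop).
Hypotheses (S_sub : subgroup S) (f_hom : forall i, hom (f i)) (B_sub : subgroup B).

Definition preimages (is : list I) (x : G) : Prop := S x /\ forall i, In i is -> B (f i x).

Lemma subgroup_preimages is : subgroup (preimages is).
Proof.
  destruct S_sub as [HS1 [HSM HSV]], B_sub as [HB1 [HBM HBV]].
  split; [|split].
  - split; [exact HS1|]. intros i _. rewrite (morph1 _ (f_hom i)). exact HB1.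
  - intros x y [Hx Hfx] [Hy Hfy]. split; [auto|]. intros i Hi. rewrite (f_hom i). auto.
  - intros x [Hx Hfx]. split; [auto|]. intros i Hi. rewrite (morphV _ _ (f_hom i)). auto.
Qed.

Lemma card_le_preimages (r : list Q) nS is :
  card S nS ->
  (forall i x, In i is -> S x -> exists y, In y r /\ B (gmul (ginv y) (f i x))) ->
  exists nT, card (preimages is) nT /\ nS <= length r ^ length is * nT.
Proof.
  intros HnS. induction is as [|i is IH]; intros Hcov.
  - exists nS. split; [|simpl; lia].
    apply (card_ext S); [|exact HnS]. intro x. unfold preimages. simpl. tauto.
  - destruct IH as [nT [HnT Hle]]; [intros j x Hj; apply Hcov; right; exact Hj|].
    destruct (card_le_preimage (preimages is) (f i) B r nT (subgroup_preimages is) (f_hom i)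
                B_sub HnT) as [nT' [HnT' Hle']].
    { intros x [Hx _]. apply Hcov; [left|]; auto. }
    exists nT'. split.
    + apply (card_ext (fun x => preimages is x /\ B (f i x))); [|exact HnT'].
      intro x. unfold preimages. simpl. firstorder congruence.
    + simpl length. rewrite Nat.pow_succ_r'. nia.
Qed.

End Preimages.

Definition centralizes {G : Group} (H : G -> Prop) (x : G) : Prop :=
  forall h, H h -> gmul x h = gmul h x.

Lemma subgroup_centralizes {G : Group} (H : G -> Prop) : subgroup (centralizes H).
Proof.
  split; [|split].
  - intros h _. group_simpl.
  - intros x y Hx Hy h Hh.
    rewrite <- gmulA, (Hy h Hh), (gmulA _ x h y), (Hx h Hh), gmulA. reflexivity.
  - intros x Hx h Hh. specialize (Hx h Hh).
    apply (f_equal (fun z => gmul (ginv x) (gmul z (ginv x)))) in Hx. group_simpl.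
Qed.

Section Extension.
Variables (G Q : Group) (H : G -> Prop) (pi : G -> Q).
Hypotheses (H_normal : forall k h, H h -> H (conjg k h)) (H_center : trivial_center H).
Hypotheses (pi_hom : hom pi) (pi_ker : forall g, pi g = gone -> H g).

Lemma centralizes_conjg k x : centralizes H x -> centralizes H (conjg k x).
Proof.
  intros Hx h Hh.
  assert (E := Hx _ (H_normal (ginv k) h Hh)). unfold conjg in *.
  apply (f_equal (fun z => gmul (gmul k z) (ginv k))) in E. group_simpl.
Qed.

(* The centralizer of [H] meets [H] trivially, hence maps injectively into [G/H]. *)
Lemma pi_inj_centralizes x y :
  centralizes H x -> centralizes H y -> pi x = pi y -> x = y.
Proof.
  intros Hx Hy E.
  assert (E1 : gmul (ginv x) y = gone).
  { apply H_center.
    - apply pi_ker. rewrite pi_hom, (morphV pi x pi_hom), E, gmulVl. reflexivity.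
    - apply subgroup_centralizes; [apply subgroup_centralizes|]; assumption. }
  rewrite <- (mulKVg x y), E1, gmul1r. reflexivity.
Qed.

Lemma conjg_automorphism k : automorphism_of H (conjg k).
Proof.
  split; [|split; [|split]].
  - exact (H_normal k).
  - intros y Hy. exists (conjg (ginv k) y). split; [auto|]. unfold conjg. group_simpl.
  - intros x y _ _ E. apply (f_equal (conjg (ginv k))) in E. unfold conjg in E. group_simpl.
  - intros x y _ _. apply conjg_hom.
Qed.

Lemma agree_conjg_centralizes k k' :
  agree_on H (conjg k) (conjg k') -> centralizes H (gmul (ginv k') k).
Proof.
  intros Hkk h Hh. specialize (Hkk h Hh). unfold conjg in Hkk.
  apply (f_equal (fun z => gmul (gmul (ginv k') z) k)) in Hkk. group_simpl.
Qed.

Variable a : nat.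
Hypothesis H_aut : aut_card H a.

Lemma aut_card_gt0 : 0 < a.
Proof.
  destruct H_aut as [ls [<- [_ [_ Hall]]]].
  assert (Hid : automorphism_of H (fun x => x)) by (repeat split; eauto).
  destruct (Hall _ Hid) as [g [Hg _]]. destruct ls; [destruct Hg | simpl; lia].
Qed.

(* Conjugation maps [K] into [Aut H] with kernel in the centralizer of [H], so at most
   [|Aut H|] left cosets of the centralizer cover [K]. *)
Lemma conjg_cover (K : G -> Prop) :
  exists ks, length ks <= a /\ (forall k, In k ks -> K k) /\
    (forall k, K k -> exists k', In k' ks /\ centralizes H (gmul (ginv k') k)).
Proof.
  destruct H_aut as [ls [Hlen [_ [_ Hall]]]].
  destruct (choose_witnesses (fun g k => K k /\ agree_on H g (conjg k)) ls)
    as [ks [Hks_len [HksK Hcov]]].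
  exists ks. repeat split; [lia | |].
  - intros k Hk. destruct (HksK k Hk) as [g [HK _]]. exact HK.
  - intros k Hk. destruct (Hall _ (conjg_automorphism k)) as [g [Hg Hkg]].
    destruct (Hcov g Hg) as [k' [Hk' [_ Hgk']]].
    { exists k. split; [exact Hk|]. intros x Hx. symmetry; apply Hkg, Hx. }
    exists k'. split; [exact Hk'|]. apply agree_conjg_centralizes.
    intros h Hh. rewrite Hkg, Hgk'; auto.
Qed.

Definition centralizer_image (K : G -> Prop) (q : Q) : Prop :=
  exists m, K m /\ centralizes H m /\ pi m = q.

Lemma centralizer_image_finite (K : G -> Prop) :
  finite_subgroup K -> finite_subgroup (centralizer_image K).
Proof.
  intros [[HK1 [HKM HKV]] [nK HnK]].
  destruct (subgroup_centralizes H) as [HC1 [HCM HCV]].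
  split; [split; [|split] |].
  - exists gone. repeat split; auto. apply morph1, pi_hom.
  - intros p q [x [Hx [Cx <-]]] [y [Hy [Cy <-]]]. exists (gmul x y). rewrite pi_hom. auto.
  - intros q [x [Hx [Cx <-]]]. exists (ginv x). rewrite (morphV pi x pi_hom). auto.
  - destruct (card_subset K (fun x => K x /\ centralizes H x) nK HnK) as [nM [s [Hs [Hl Hm]]]];
      [tauto|].
    exists nM, (map pi s). split; [|split; [|intro q; split]].
    + apply NoDup_map_NoDup_ForallPairs; [|exact Hs].
      intros x y Hx Hy. apply Hm in Hx, Hy. apply pi_inj_centralizes; tauto.
    + rewrite length_map. exact Hl.
    + intros [x [Hx [Cx <-]]]. apply in_map. apply Hm. auto.
    + intro Hq. apply in_map_iff in Hq. destruct Hq as [x [<- Hx]]. apply Hm in Hx.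
      exists x. tauto.
Qed.

Lemma pi_conjg_hom k : hom (fun x => pi (conjg k x)).
Proof. intros x y. rewrite conjg_hom. apply pi_hom. Qed.

(* The normal core in [K] of the preimage of [B] in the centralizer of [H]. *)
Definition core (K : G -> Prop) (B : Q -> Prop) (x : G) : Prop :=
  K x /\ centralizes H x /\ forall k, K k -> B (pi (conjg k x)).

Lemma core_normal K B : subgroup K -> subgroup B -> normal_in (core K B) K.
Proof.
  intros [HK1 [HKM HKV]] [HB1 [HBM HBV]].
  destruct (subgroup_centralizes H) as [HC1 [HCM HCV]].
  split; [split; [|split] | split].
  - repeat split; auto. intros k _. rewrite (morph1 _ (pi_conjg_hom k)). exact HB1.
  - intros x y [Kx [Cx Bx]] [Ky [Cy By]]. repeat split; auto.
    intros k Hk. rewrite (pi_conjg_hom k). auto.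
  - intros x [Kx [Cx Bx]]. repeat split; auto.
    intros k Hk. rewrite (morphV _ x (pi_conjg_hom k)). auto.
  - intros x [Kx _]. exact Kx.
  - intros k x Hk [Kx [Cx Bx]]. repeat split.
    + unfold conjg. auto.
    + apply centralizes_conjg, Cx.
    + intros k' Hk'. change (gmul (gmul k x) (ginv k)) with (conjg k x).
      rewrite <- conjgM. auto.
Qed.

Lemma core_abelian K B : K gone -> abelian_set B -> abelian_set (core K B).
Proof.
  intros HK1 HBab x y [_ [Cx Bx]] [_ [Cy By]].
  destruct (subgroup_centralizes H) as [_ [HCM _]].
  apply pi_inj_centralizes; auto.
  specialize (Bx gone HK1). specialize (By gone HK1). unfold conjg in Bx, By.
  rewrite gmul1l, invg1, gmul1r in Bx, By.
  rewrite !pi_hom. auto.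
Qed.

Lemma core_from_cover (K : G -> Prop) (B : Q -> Prop) (ks : list G) x :
  subgroup K ->
  (forall p b, centralizer_image K p -> B b -> B (conjg p b)) ->
  (forall k, In k ks -> K k) ->
  (forall k, K k -> exists k', In k' ks /\ centralizes H (gmul (ginv k') k)) ->
  K x -> centralizes H x -> (forall k, In k ks -> B (pi (conjg k x))) -> core K B x.
Proof.
  intros [_ [HKM HKV]] HBn HksK Hcov Kx Cx Bx. repeat split; [exact Kx | exact Cx |].
  intros k Hk. destruct (Hcov k Hk) as [k' [Hk' Ck'k]].
  assert (E : gmul k (ginv k') = conjg k (gmul (ginv k') k)) by (unfold conjg; group_simpl).
  replace (conjg k x) with (conjg (gmul k (ginv k')) (conjg k' x))
    by (rewrite <- conjgM; f_equal; group_simpl).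
  rewrite (morph_conjg pi _ _ pi_hom). apply HBn; [|auto].
  exists (gmul k (ginv k')). repeat split; auto.
  rewrite E. apply centralizes_conjg, Ck'k.
Qed.

Lemma core_card (K : G -> Prop) (B : Q -> Prop) (r : list Q) nK :
  subgroup K -> card K nK -> subgroup B ->
  (forall p b, centralizer_image K p -> B b -> B (conjg p b)) ->
  (forall q, centralizer_image K q -> exists y, In y r /\ B (gmul (ginv y) q)) ->
  exists nA, card (core K B) nA /\ nK <= a * length r ^ a * nA.
Proof.
  intros HK HnK HB HBn Hr.
  pose proof HK as [HK1 [HKM HKV]].
  destruct (conjg_cover K) as [ks [Hks_len [HksK Hcov]]].
  set (M := fun x => K x /\ centralizes H x).
  assert (HM : subgroup M).
  { destruct (subgroup_centralizes H) as [HC1 [HCM HCV]].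
    split; [|split]; unfold M; [tauto | intros x y [] []; auto | intros x []; auto]. }
  destruct (card_subset K M nK HnK) as [nM HnM]; [unfold M; tauto|].
  assert (HKM_le : nK <= length ks * nM).
  { apply (card_le_cosets K M ks (fun k k' => centralizes H (gmul (ginv k') k))); auto.
    intros y x0 x Hx0 Hx Cx0 Cx. split; [auto|].
    replace (gmul (ginv x0) x) with (gmul (ginv (gmul (ginv y) x0)) (gmul (ginv y) x))
      by group_simpl.
    apply subgroup_centralizes; [apply subgroup_centralizes|]; assumption. }
  destruct (card_le_preimages G Q G M (fun k x => pi (conjg k x)) B HM pi_conjg_hom HB
              r nM ks HnM) as [nA [HnA HMA]].
  { intros k x Hk [Kx Cx]. apply Hr. exists (conjg k x). repeat split.
    - unfold conjg. auto.
    - apply centralizes_conjg, Cx. }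
  exists nA. split.
  - apply (card_ext (preimages G Q G M (fun k x => pi (conjg k x)) B ks)); [|exact HnA].
    intro x. split.
    + intros [[Kx Cx] Bx]. apply (core_from_cover K B ks); auto.
    + intros [Kx [Cx Bx]]. repeat split; auto.
  - assert (Hr_pos : 0 < length r).
    { destruct (Hr gone) as [y [Hy _]]; [|destruct r; [destruct Hy | simpl; lia]].
      exists gone. repeat split; auto; [apply subgroup_centralizes | apply morph1, pi_hom]. }
    assert (length r ^ length ks <= length r ^ a) by (apply Nat.pow_le_mono_r; lia).
    rewrite <- Nat.mul_assoc. apply (Nat.le_trans _ _ _ HKM_le).
    apply Nat.mul_le_mono; [exact Hks_len|].
    apply (Nat.le_trans _ _ _ HMA), Nat.mul_le_mono_r; assumption.
Qed.

Lemma jordan_with_extension JQ : jordan_with Q JQ -> jordan_with G (a * JQ ^ a).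
Proof.
  intros [HJQ HJ]. split.
  { assert (0 < JQ ^ a) by (apply Nat.neq_0_lt_0, Nat.pow_nonzero; lia).
    pose proof aut_card_gt0. nia. }
  intros K [HK [nK HnK]].
  destruct (centralizer_image_finite K (conj HK (ex_intro _ nK HnK))) as [HP [nP HnP]].
  destruct (HJ _ (conj HP (ex_intro _ nP HnP)))
    as [B [[HB [HBP HBn]] [HBab [nP' [nB [HnP' [HnB Hidx]]]]]]].
  rewrite (card_unique _ _ _ HnP' HnP) in Hidx.
  destruct (left_transversal B (centralizer_image K) nB nP HB HnB HnP) as [r [Hr Hcov]].
  { intros p b Hp Hb. apply HP; auto. }
  assert (HnB_pos : 0 < nB).
  { destruct HnB as [[|? ?] [_ [<- HlB]]]; [|simpl; lia].
    destruct (proj1 (HlB gone) (proj1 HB)). }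
  assert (Hr_le : length r <= JQ).
  { rewrite Hr, Nat.mul_comm, Nat.div_mul in Hidx; lia. }
  destruct (core_card K B r nK HK HnK HB HBn Hcov) as [nA [HnA Hle]].
  exists (core K B). split; [apply core_normal; auto|].
  split; [apply core_abelian; [apply HK | exact HBab]|].
  exists nK, nA. repeat split; auto.
  apply Nat.Div0.div_le_upper_bound. rewrite Nat.mul_comm.
  apply (Nat.le_trans _ _ _ Hle), Nat.mul_le_mono_r, Nat.mul_le_mono_l.
  apply Nat.pow_le_mono_l, Hr_le.
Qed.

End Extension.

Theorem corollary1p21 (G Q : Group) (H : G -> Prop) (pi : G -> Q)
  (a JQ : nat) :
  finite_subgroup H -> normal_in H (fun _ => True) -> trivial_center H ->
  quotient_map H pi -> aut_card H a ->
  jordan_constant Q JQ ->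
  jordan G /\ (forall JG, jordan_constant G JG -> JG <= a * Nat.pow JQ a).
Proof.
  intros _ [_ [_ H_normal]] H_center [pi_hom [_ pi_ker]] H_aut [HJQ _].
  assert (HJG : jordan_with G (a * JQ ^ a)).
  { apply (jordan_with_extension G Q H pi); auto.
    - intros k h Hh. exact (H_normal k h I Hh).
    - intro g. apply pi_ker. }
  split; [exists (a * JQ ^ a); exact HJG|].
  intros JG [_ HJG_min]. exact (HJG_min _ HJG).
Qed.
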